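(* Let $\lambda_\pm:V_0\to(0,\infty)$, $\rho_B=\frac{\lambda_+}{\lambda_++\lambda_-}$, $\rho_*=\min_{V_0}\rho_B$, $\rho^*=\max_{V_0}\rho_B$, and let $\varrho:K\to\mathbb R$ satisfy $\varrho\in\mathcal F$, $\varrho|_{V_0}=\rho_B$, $\min_K\varrho=\rho_*$, $\max_K\varrho=\rho^*$. Then there is a constant $C>0$ depending only on $\rho_B$ and $\|c\|_\infty$ such that for every $N\ge1$ and every $\psi:\Omega_N\to\mathbb R$ with $\psi^2$ a density with respect to $\nu_\varrho$, \[ \big\langle\psi,-5^{-N}\mathcal L_N^G\psi\big\rangle_{\nu_\varrho}\ge -C\Big(\frac35\Big)^N. \]
   Context: Sierpiński gasket: $a_0=(\tfrac12,\tfrac{\sqrt3}2)$, $a_1=(0,0)$, $a_2=(1,0)$, $V_0=\{a_0,a_1,a_2\}$, $\varphi_i(x)=(x+a_i)/2$, $K$ the unique nonempty compact set with $K=\bigcup_i\varphi_i(K)$; for words $w$ over $\{0,1,2\}$, $\varphi_w$ is the composition of the $\varphi_{w_i}$. $V_N=\bigcup_{|w|=N}\varphi_w(V_0)$, $x\sim y$ ($x\ne y$) iff $x,y\in\varphi_w(V_0)$ for some $|w|=N$; $V_N^0=V_N\setminus V_0$; $L(x,y)$ graph distance on $V_N$. $\mathcal E_N(f)=\frac12(\frac53)^N\sum_{x\in V_N}\sum_{y\sim x}(f(y)-f(x))^2$, $\mathcal E=\lim_N\mathcal E_N$, $\mathcal F=\{f:K\to\mathbb R:\mathcal E(f)<\infty\}\subset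 C(K)$. $\Omega_N=\{0,1\}^{V_N}$; $\eta^x$ is $\eta$ with the value at $x$ flipped. $\nu_\varrho$ is the product measure on $\Omega_N$ with $\nu_\varrho(\eta(x)=1)=\varrho(x)$; $\langle\cdot,\cdot\rangle_{\nu_\varrho}$ its $L^2$ inner product; a nonnegative $f$ is a density w.r.t. $\nu_\varrho$ if $E_{\nu_\varrho}[f]=1$. $\mathcal L_N^G\varphi(\eta)=\sum_{x\in V_N^0}c_x(\eta)[\varphi(\eta^x)-\varphi(\eta)]$, where the rates satisfy: for a fixed integer $L_0\ge1$, with $\Lambda_x=\{y\in V_N:L(x,y)\le L_0\}$ and $\mathcal S=\{2^N(\Lambda_x-x):x\in V_N^0\}$ (independent of $N$ for large $N$), there are functions $c(\cdot;\Lambda):\{0,1\}^\Lambda\to(0,\infty)$, $\Lambda\in\mathcal S$, with $c_x(\eta)=c(\eta|_{\Lambda_x};2^N(\Lambda_x-x))$ for all large $N$; $\|c\|_\infty:=\max_{\Lambda\in\mathcal S}\max_{\xi\in\{0,1\}^\Lambda}c(\xi;\Lambda)$. *)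

From HB Require Import structures.
From mathcomp Require Import all_boot all_order all_algebra.
From mathcomp Require Import all_classical all_reals all_analysis.
Set Implicit Arguments. Unset Strict Implicit. Unset Printing Implicit Defensive.
Import Order.TTheory GRing.Theory Num.Theory numFieldNormedType.Exports.
Local Open Scope ring_scope.
Local Open Scope classical_set_scope.

Section Gasket.
Variable R : realType.
Notation P := (R * R)%type.

Definition avert (i : 'I_3) : P :=
  if val i == 0%N then (2^-1, Num.sqrt 3 / 2)
  else if val i == 1%N then (0, 0) else (1, 0).

Definition V0 : seq P := [seq avert i | i : 'I_3].

Definition phi (i : 'I_3) (x : P) : P :=
  ((x.1 + (avert i).1) / 2, (x.2 + (avert i).2) / 2).

Definition phiw (w : seq 'I_3) (x : P) : P := foldr phi x w.

Definition is_gasket (K : set P) : Prop :=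
  compact K /\ K !=set0 /\ K = \bigcup_(i in [set: 'I_3]) (phi i @` K).

Definition cell (w : seq 'I_3) : seq P := [seq phiw w (avert i) | i : 'I_3].

Definition VN (N : nat) : seq P :=
  undup (flatten [seq cell (val w) | w : N.-tuple 'I_3]).

Definition adj (N : nat) (x y : P) : Prop :=
  x <> y /\ exists w : N.-tuple 'I_3, x \in cell (val w) /\ y \in cell (val w).

Definition EN (N : nat) (f : P -> R) : R :=
  2^-1 * (5 / 3) ^+ N *
  \sum_(x <- VN N) \sum_(y <- VN N | `[< adj N x y >]) (f y - f x) ^+ 2.

Definition in_F (f : P -> R) : Prop :=
  exists l : R, (fun n => EN n f) @ \oo --> l.

Fixpoint walk (N : nat) (x : P) (p : seq P) (y : P) : Prop :=
  match p with
  | [::] => x = y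
  | z :: p' => adj N x z /\ walk N z p' y
  end.

Definition Lambda (N L0 : nat) (x : P) : set P :=
  [set y | y \in VN N /\ exists p : seq P, (size p <= L0)%N /\ walk N x p y].

Definition shape (N L0 : nat) (x : P) : set P :=
  [set ((2 ^+ N) * (y.1 - x.1), (2 ^+ N) * (y.2 - x.2)) | y in Lambda N L0 x].

Definition VT (N : nat) := seq_sub (VN N).
Definition Omega (N : nat) := {ffun VT N -> bool}.

Definition flip N (eta : Omega N) (x : VT N) : Omega N :=
  [ffun y => if y == x then ~~ eta y else eta y].

(* value of a configuration at an arbitrary point (false off V_N) *)
Definition evc N (eta : Omega N) (p : P) : bool :=
  if insub p is Some q then eta q else false.

Definition rate_family (c : set P -> (P -> bool) -> R) : Prop :=
  (forall L xi, 0 < c L xi) /\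
  (forall L xi xi', (forall z, L z -> xi z = xi' z) -> c L xi = c L xi').

(* c_x(eta) = c(eta|_{Lambda_x}; 2^N(Lambda_x - x)), transported to the shape *)
Definition rate (c : set P -> (P -> bool) -> R) N L0 (x : VT N) (eta : Omega N) : R :=
  c (shape N L0 (val x))
    (fun z => evc eta ((val x).1 + z.1 / 2 ^+ N, (val x).2 + z.2 / 2 ^+ N)).

Definition cnorm (c : set P -> (P -> bool) -> R) (L0 : nat) : R :=
  sup [set v | exists N (x : P) (xi : P -> bool),
          (1 <= N)%N /\ x \in VN N /\ x \notin V0 /\ v = c (shape N L0 x) xi].

Definition LG (c : set P -> (P -> bool) -> R) N L0 (phi0 : Omega N -> R)
  (eta : Omega N) : R :=
  \sum_(x : VT N | val x \notin V0) rate c L0 x eta * (phi0 (flip eta x) - phi0 eta).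

Definition nu N (varrho : P -> R) (eta : Omega N) : R :=
  \prod_(x : VT N) (if eta x then varrho (val x) else 1 - varrho (val x)).

Definition Enu N (varrho : P -> R) (f : Omega N -> R) : R :=
  \sum_(eta : Omega N) nu varrho eta * f eta.

Definition inner N (varrho : P -> R) (f g : Omega N -> R) : R :=
  Enu varrho (fun eta => f eta * g eta).

End Gasket.

From Pilot Require Import Defs.
From HB Require Import structures.
From mathcomp Require Import all_boot all_order all_algebra.
From mathcomp Require Import all_classical all_reals all_analysis.
From mathcomp Require Import ring lra zify.
Import Order.TTheory GRing.Theory Num.Theory numFieldNormedType.Exports.
Set Implicit Arguments. Unset Strict Implicit. Unset Printing Implicit Defensive.
Local Open Scope ring_scope.
Local Open Scope classical_set_scope.

(* Each flip eta |-> eta^x is an involution of Omega_N, and since varrho takes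
   values in [rho_*, rho^*], a compact subinterval of (0, 1), on V_N (a subset of
   K), it changes nu_varrho by at most a factor r = 1/rho_* + 1/(1 - rho^* ).
   Hence 2 a (b - a) <= b^2 and the change of variables eta -> eta^x bound the
   contribution of each site to <psi, L_N^G psi> by r ||c||_oo / 2.  There are at
   most 3^(N+1) sites, and multiplying by 5^-N gives the bound in (3/5)^N.
   ||c||_oo is a genuine bound on the rates because all rescaled neighbourhoods
   2^N (Lambda_x - x) lie in a fixed finite window of the triangular lattice. *)

Section FlipForm.
Variables (R : realFieldType) (T : finType) (nu psi : T -> R) (r m : R).
Hypothesis nu_ge0 : forall t, 0 <= nu t.

Lemma flip_form_le (fl : T -> T) (c : T -> R) :
  involutive fl -> (forall t, 0 <= c t <= m) ->
  (forall t, nu (fl t) <= r * nu t) ->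
  \sum_t nu t * c t * (psi t * (psi (fl t) - psi t))
    <= r * m / 2 * \sum_t nu t * psi t ^+ 2.
Proof.
move=> flK c_bd nu_fl.
apply: (@le_trans _ _ (\sum_t nu t * c t * psi (fl t) ^+ 2 / 2)).
  apply: ler_sum => t _; have /andP[c_ge0 _] := c_bd t.
  have nc_ge0 := mulr_ge0 (nu_ge0 t) c_ge0.
  move: (nu t * c t) nc_ge0 (psi t) (psi (fl t)) => a a_ge0 x y.
  have := mulr_ge0 a_ge0 (addr_ge0 (sqr_ge0 (y - x)) (sqr_ge0 x)); nra.
rewrite (reindex_inj (can_inj flK)) /= mulr_sumr; apply: ler_sum => t _.
rewrite flK; have /andP[c_ge0 c_le] := c_bd (fl t).
have : nu (fl t) * c (fl t) <= r * nu t * m.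
  exact: ler_pM (nu_ge0 _) c_ge0 (nu_fl t) c_le.
have := sqr_ge0 (psi t).
move: (nu (fl t) * c (fl t)) (psi t ^+ 2) => a b b_ge0 a_le; nra.
Qed.

Lemma flip_generator_le (X : finType) (Px : pred X) (fl : X -> T -> T)
    (c : X -> T -> R) :
  (forall x, involutive (fl x)) -> (forall x t, Px x -> 0 <= c x t <= m) ->
  (forall x t, nu (fl x t) <= r * nu t) ->
  \sum_t nu t * (psi t * \sum_(x | Px x) c x t * (psi (fl x t) - psi t))
    <= #|Px|%:R * (r * m / 2 * \sum_t nu t * psi t ^+ 2).
Proof.
move=> flK c_bd nu_fl.
rewrite mulr_natl -sumr_const.
have -> : \sum_t nu t * (psi t * \sum_(x | Px x) c x t * (psi (fl x t) - psi t))
    = \sum_(x | Px x) \sum_t nu t * c x t * (psi t * (psi (fl x t) - psi t)).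
  rewrite exchange_big /=; apply: eq_bigr => t _.
  rewrite !mulr_sumr; apply: eq_bigr => x _; ring.
by apply: ler_sum => x Px_x; apply: flip_form_le => // t; apply: c_bd.
Qed.

End FlipForm.

Lemma bernoulli_odds_le (R : realFieldType) (a b t : R) :
  0 < a -> b < 1 -> a <= t <= b ->
  1 - t <= (a^-1 + (1 - b)^-1) * t /\ t <= (a^-1 + (1 - b)^-1) * (1 - t).
Proof.
move=> a_gt0 b_lt1 /andP[a_le_t t_le_b].
have t_gt0 : 0 < t := lt_le_trans a_gt0 a_le_t.
have t_lt1 : 0 < 1 - t by rewrite subr_gt0; apply: le_lt_trans b_lt1.
have ia : 0 <= a^-1 by rewrite invr_ge0 ltW.
have ib : 0 <= (1 - b)^-1 by rewrite invr_ge0 subr_ge0 ltW.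
have a1 : 1 <= a^-1 * t by rewrite ler_pdivlMl // mulr1.
have b1 : 1 <= (1 - b)^-1 * (1 - t) by rewrite ler_pdivlMl ?subr_gt0 // mulr1 lerB.
have := mulr_ge0 ib (ltW t_gt0); have := mulr_ge0 ia (ltW t_lt1).
by rewrite !mulrDl; split; lra.
Qed.

Section ProductMeasure.
Variables (R : realType) (N : nat) (varrho : R * R -> R) (a b : R).
Hypotheses (a_gt0 : 0 < a) (b_lt1 : b < 1).
Hypothesis varrho_bd : forall y : VT R N, a <= varrho (val y) <= b.

Lemma bernoulli_weight_ge0 (e : bool) (y : VT R N) :
  0 <= if e then varrho (val y) else 1 - varrho (val y).
Proof.
have /andP[a_le le_b] := varrho_bd y.
by case: e; [apply: le_trans a_le; apply: ltW | rewrite subr_ge0 (le_trans le_b) ?ltW].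
Qed.

Lemma nu_ge0 (eta : Omega R N) : 0 <= nu varrho eta.
Proof. by apply: prodr_ge0 => y _; apply: bernoulli_weight_ge0. Qed.

Lemma nu_flip_le (x : VT R N) (eta : Omega R N) :
  nu varrho (flip eta x) <= (a^-1 + (1 - b)^-1) * nu varrho eta.
Proof.
have [odds_le odds_ge] := bernoulli_odds_le a_gt0 b_lt1 (varrho_bd x).
rewrite /nu (bigD1 x) //= [X in _ <= _ * X](bigD1 x) //= mulrA.
rewrite (eq_bigr (fun y => if eta y then varrho (val y) else 1 - varrho (val y))).
  apply: ler_wpM2r; first by apply: prodr_ge0 => y _; apply: bernoulli_weight_ge0.
  by rewrite ffunE eqxx; case: (eta x).
by move=> y /negbTE y_neq_x; rewrite ffunE y_neq_x.
Qed.

End ProductMeasure.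

Lemma flipK (R : realType) N (x : VT R N) : involutive (fun eta : Omega R N => flip eta x).
Proof. by move=> eta; apply/ffunP => y; rewrite !ffunE; case: (y == x); rewrite ?negbK. Qed.

Section Lattice.
Variable R : realType.
Notation P := (R * R)%type.

Definition rescale (N : nat) (x v : P) : P := (x.1 + v.1 / 2 ^+ N, x.2 + v.2 / 2 ^+ N).

(* the triangular lattice spanned by a_0 - a_1 and a_2 - a_1 *)
Definition lattice_pt (i j : int) : P :=
  (i%:~R / 2 + j%:~R, i%:~R * (Num.sqrt 3 / 2)).

Definition vertex_coords (a : 'I_3) : int * int :=
  if val a == 0%N then (1, 0) else if val a == 1%N then (0, 0) else (0, 1).

Lemma avert_lattice (a : 'I_3) :
  avert R a = lattice_pt (vertex_coords a).1 (vertex_coords a).2.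
Proof.
by case: a => [[|[|[|?]]] ?] //; rewrite /avert /lattice_pt /=;
  congr pair; rewrite ?(mul0r, mul1r, addr0, add0r).
Qed.

Lemma rescale_latticeD N x i j i' j' :
  rescale N (rescale N x (lattice_pt i j)) (lattice_pt i' j')
  = rescale N x (lattice_pt (i + i') (j + j')).
Proof. by rewrite /rescale /lattice_pt /= !intrD; congr pair; ring. Qed.

Lemma rescaleK N (x v : P) :
  (2 ^+ N * ((rescale N x v).1 - x.1), 2 ^+ N * ((rescale N x v).2 - x.2)) = v.
Proof.
have two_neq0 : (2 : R) ^+ N != 0 by rewrite expf_neq0 // pnatr_eq0.
by case: v => v1 v2; rewrite /rescale /=; congr pair; field.
Qed.

Lemma phiw_rescale (w : seq 'I_3) : exists b : P, phiw w =1 rescale (size w) b.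
Proof.
elim: w => [|i w [b IH]].
  by exists (0, 0) => -[p1 p2]; rewrite /rescale /= expr0 !divr1 !add0r.
exists ((b.1 + (avert R i).1) / 2, (b.2 + (avert R i).2) / 2) => p.
have two_neq0 : (2 : R) ^+ size w != 0 by rewrite expf_neq0 // pnatr_eq0.
by rewrite /= IH /phi /rescale /= exprS; congr pair; field.
Qed.

Lemma adj_lattice N (x y : P) : adj N x y ->
  exists i j : int, `|i| <= 1 /\ `|j| <= 1 /\ y = rescale N x (lattice_pt i j).
Proof.
move=> [_ [w [/mapP[a _ ->] /mapP[b _ ->]]]].
have [s s_eq] := phiw_rescale (val w); rewrite !s_eq size_tuple !avert_lattice.
set ea := vertex_coords a; set eb := vertex_coords b.
exists (eb.1 - ea.1), (eb.2 - ea.2).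
split; [|split]; last by rewrite rescale_latticeD !subrKC.
all: by rewrite /ea /eb {ea eb}; case: a => [[|[|[|?]]] ?]; case: b => [[|[|[|?]]] ?].
Qed.

Lemma walk_lattice N (p : seq P) (x y : P) : walk N x p y ->
  exists i j : int, `|i| <= (size p)%:Z /\ `|j| <= (size p)%:Z /\
    y = rescale N x (lattice_pt i j).
Proof.
elim: p x => [|z p IH] x /=.
  move=> ->; exists 0, 0; do 2 split => //.
  by case: y => y1 y2; rewrite /rescale /lattice_pt /= !(mul0r, addr0).
case=> /adj_lattice[i [j [i_le [j_le ->]]]] /IH[i' [j' [i'_le [j'_le ->]]]].
exists (i + i'), (j + j'); rewrite rescale_latticeD -add1n PoszD.
by split; [|split] => //; apply: le_trans (ler_normD _ _) _; apply: lerD.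
Qed.

Lemma shape_lattice N L0 (x z : P) : Defs.shape N L0 x z ->
  exists i j : int, `|i| <= L0%:Z /\ `|j| <= L0%:Z /\ z = lattice_pt i j.
Proof.
move=> [y [_ [p [p_le /walk_lattice[i [j [i_le [j_le y_eq]]]]]]] <-].
exists i, j; rewrite y_eq rescaleK.
by split; [|split] => //; apply: le_trans (_ : _ <= (size p)%:Z) _; rewrite ?lez_nat.
Qed.

Definition box_pt L0 (k : 'I_(2 * L0 + 1) * 'I_(2 * L0 + 1)) : P :=
  lattice_pt (k.1%:Z - L0%:Z) (k.2%:Z - L0%:Z).

Lemma shape_sub_box N L0 (x : P) : Defs.shape N L0 x `<=` range (@box_pt L0).
Proof.
have box_ord (i : int) : `|i| <= L0%:Z -> exists k : 'I_(2 * L0 + 1), k%:Z - L0%:Z = i.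
  move=> i_le; have k_lt : (absz (i + L0%:Z)%R < 2 * L0 + 1)%N by lia.
  by exists (Ordinal k_lt) => /=; lia.
move=> z /shape_lattice[i [j [/box_ord[k1 <-] [/box_ord[k2 <-] ->]]]].
by exists (k1, k2).
Qed.

End Lattice.

Section LocalRates.
Variables (R : realType) (c : set (R * R) -> (R * R -> bool) -> R).
Hypothesis c_rates : rate_family c.

(* Only finitely many pairs (L, xi|_L) occur on the range of [g], so the sum of
   [c] over all of them bounds every rate. *)
Lemma rate_family_bounded_on (T : finType) (g : T -> R * R) :
  exists B, forall L xi, L `<=` range g -> c L xi <= B.
Proof.
pose ext (f : {ffun T -> bool}) z := if [pick k | g k == z] is Some k then f k else false.
exists (\sum_(S : {set T}) \sum_(f : {ffun T -> bool}) c (g @` [set k | k \in S]) (ext f)).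
move=> L xi L_sub.
pose S := finset (fun k => `[< L (g k) >]); pose f := [ffun k => xi (g k)].
have L_eq : g @` [set k | k \in S] = L.
  apply/seteqP; split => z.
  - by case=> k /=; rewrite inE => /asboolP Lgk <-.
  - move=> Lz; have [k _ gk] := L_sub z Lz.
    by exists k => //=; rewrite inE; apply/asboolP; rewrite gk.
have xi_eq z : L z -> xi z = ext f z.
  move=> Lz; rewrite /ext; case: pickP => [k /eqP <- | none]; first by rewrite ffunE.
  by have [k _ gk] := L_sub z Lz; move: (none k); rewrite gk eqxx.
have c_ge0 L' xi' : 0 <= c L' xi' := ltW (c_rates.1 L' xi').
rewrite (c_rates.2 L xi (ext f) xi_eq) -L_eq (bigD1 S) //= (bigD1 f) //= -addrA lerDl.
by rewrite addr_ge0 ?sumr_ge0 // => S' _; rewrite sumr_ge0.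
Qed.

Lemma rate_le_cnorm N L0 (x : VT R N) (eta : Omega R N) :
  (1 <= N)%N -> val x \notin V0 R -> rate c L0 x eta <= cnorm c L0.
Proof.
move=> N_ge1 x_int; have [B B_bd] := rate_family_bounded_on (@box_pt R L0).
apply: ub_le_sup.
  by exists B => _ [N' [x' [xi [_ [_ [_ ->]]]]]]; apply/B_bd/shape_sub_box.
exists N, (val x), (fun z => evc eta (rescale N (val x) z)).
by split => //; split; [exact: ssvalP | split].
Qed.

End LocalRates.

Section GasketVertices.
Variables (R : realType) (K : set (R * R)).
Hypothesis K_gasket : is_gasket K.

Lemma rescale_cvg (x v : R * R) : rescale n x v @[n --> \oo] --> x.
Proof.
have half_lt1 : `|(2^-1 : R)| < 1.
  by rewrite ger0_norm ?invr_ge0 ?ler0n // invf_lt1 // ltr1n.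
have shrink (a b : R) : a + b / 2 ^+ n @[n --> \oo] --> a.
  rewrite -[X in _ --> X]addr0 -(mulr0 b).
  under eq_fun do rewrite -exprVn.
  exact: cvgD (cvg_cst _) (cvgM (cvg_cst _) (cvg_expr half_lt1)).
by case: x => x1 x2; apply: (@cvg_pair _ _ _ _ (nbhs x1) (nbhs x2)); apply: shrink.
Qed.

Lemma phi_gasket i p : K p -> K (phi i p).
Proof. by move=> Kp; case: K_gasket => _ [_ ->]; exists i => //; exists p. Qed.

(* [a_i] is the limit of [phi_i^n k] for any [k] in the closed set [K] *)
Lemma avert_gasket i : K (avert R i).
Proof.
have [K_compact [[k Kk] _]] := K_gasket.
have K_closed : closed K by apply: compact_closed => //; exact: ball_hausdorff.
set v := (k.1 - (avert R i).1, k.2 - (avert R i).2).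
have iter_phi n : iter n (phi i) k = rescale n (avert R i) v.
  elim: n => [|n IH]; first by rewrite /v /rescale /= !divr1 !subrKC -surjective_pairing.
  by rewrite iterS IH /phi /rescale /= exprS; congr pair; field.
apply: (closed_cvg _ K_closed _ _ (@rescale_cvg (avert R i) v)).
by apply: nearW => n; rewrite -iter_phi; elim: n => [|n IH] //=; apply: phi_gasket.
Qed.

Lemma VN_gasket N x : x \in VN R N -> K x.
Proof.
rewrite mem_undup => /flattenP[_ /mapP[w _ ->]] /mapP[j _ ->].
by elim: (val w) => [|a l IH] /=; [apply: avert_gasket | apply: phi_gasket].
Qed.

End GasketVertices.

Lemma card_VT (R : realType) N : (#|{: VT R N}| <= 3 * 3 ^ N)%N.
Proof.
rewrite card_seq_sub ?undup_uniq // (leq_trans (size_undup _)) // size_flatten.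
rewrite /shape -map_comp sumnE big_map.
under eq_bigr do rewrite /= /cell size_map size_enum_ord.
by rewrite big_enum sum_nat_const card_tuple card_ord mulnC.
Qed.

Lemma rescaled_bound_35 (R : realFieldType) N (S k : R) :
  S <= 3 * 3 ^+ N * k -> - (3 * k + 1) * (3 / 5) ^+ N <= - (5 ^+ N)^-1 * S.
Proof.
rewrite exprMn exprVn !mulNr lerN2 => S_le.
have q_ge0 : 0 <= (5 ^+ N : R)^-1 by rewrite invr_ge0 exprn_ge0.
have := ler_wpM2l q_ge0 S_le; have := mulr_ge0 (exprn_ge0 N (ler0n R 3)) q_ge0.
move: (3 ^+ N) ((5 ^+ N)^-1) => u v; nra.
Qed.

Theorem proposition3p1 (R : realType) (rhoB : 'I_3 -> R) (M : R) :
  exists C : R, 0 < C /\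
  forall (lp lm : 'I_3 -> R) (K : set (R * R)) (varrho : R * R -> R)
         (L0 : nat) (c : set (R * R) -> (R * R -> bool) -> R),
    (forall i, 0 < lp i) -> (forall i, 0 < lm i) ->
    (forall i, rhoB i = lp i / (lp i + lm i)) ->
    is_gasket K ->
    in_F varrho ->
    (forall i, varrho (avert R i) = rhoB i) ->
    (forall x, K x -> \big[Num.min/rhoB ord0]_(i < 3) rhoB i <= varrho x) ->
    (exists x, K x /\ varrho x = \big[Num.min/rhoB ord0]_(i < 3) rhoB i) ->
    (forall x, K x -> varrho x <= \big[Num.max/rhoB ord0]_(i < 3) rhoB i) ->
    (exists x, K x /\ varrho x = \big[Num.max/rhoB ord0]_(i < 3) rhoB i) ->
    (1 <= L0)%N ->
    rate_family c ->
    cnorm c L0 = M ->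
    forall (N : nat) (psi : Omega R N -> R),
      (1 <= N)%N ->
      Enu varrho (fun eta => psi eta ^+ 2) = 1 ->
      inner varrho psi (fun eta => - (5 ^+ N)^-1 * LG c L0 psi eta)
        >= - C * (3 / 5) ^+ N.
Proof.
set rmin := \big[Num.min/_]_(i < 3) _; set rmax := \big[Num.max/_]_(i < 3) _.
pose r := rmin^-1 + (1 - rmax)^-1; pose k := `|r * M| / 2.
exists (3 * k + 1); split; first by rewrite ltr_pwDr // mulr_ge0 ?divr_ge0.
move=> lp lm K varrho L0 c lp_gt0 lm_gt0 rhoB_eq K_gasket _ _ varrho_ge _ varrho_le _ _
  c_rates cnormE N psi N_ge1 psi_norm.
have rhoB_gt0 i : 0 < rhoB i by rewrite rhoB_eq divr_gt0 ?addr_gt0.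
have rhoB_lt1 i : rhoB i < 1 by rewrite rhoB_eq ltr_pdivrMr ?addr_gt0 // mul1r ltrDl.
have rmin_gt0 : 0 < rmin by apply/bigmin_gtP; split=> [|i _]; apply: rhoB_gt0.
have rmax_lt1 : rmax < 1 by apply/bigmax_ltP; split=> [|i _]; apply: rhoB_lt1.
have varrho_VN (y : VT R N) : rmin <= varrho (val y) <= rmax.
  by have Ky := VN_gasket K_gasket (ssvalP y); rewrite varrho_ge ?varrho_le.
have rate_bd (x : VT R N) (eta : Omega R N) : val x \notin V0 R -> 0 <= rate c L0 x eta <= M.
  by move=> x_int; rewrite ltW ?c_rates.1 // -cnormE rate_le_cnorm.
have := flip_generator_le psi (nu_ge0 rmin_gt0 rmax_lt1 varrho_VN) (@flipK R N) rate_bd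
  (nu_flip_le rmin_gt0 rmax_lt1 varrho_VN).
rewrite [\sum_t _ * psi t ^+ 2]psi_norm mulr1 => gen_le.
have card_le : (#|[pred x : VT R N | val x \notin V0 R]|%:R : R) <= 3 * 3 ^+ N.
  by rewrite -natrX -natrM ler_nat (leq_trans (max_card _) (card_VT R N)).
have S_le : \sum_t nu varrho t * (psi t * LG c L0 psi t) <= 3 * 3 ^+ N * k.
  apply: (le_trans gen_le); apply: le_trans (ler_wpM2r _ card_le); last by rewrite divr_ge0.
  by rewrite ler_wpM2l // ler_wpM2r ?invr_ge0 // ler_norm.
have inner_eq : inner varrho psi (fun eta => - (5 ^+ N)^-1 * LG c L0 psi eta)
    = - (5 ^+ N)^-1 * \sum_t nu varrho t * (psi t * LG c L0 psi t).
  by rewrite /inner /Enu mulr_sumr; apply: eq_bigr => t _; ring.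
by rewrite inner_eq; apply: rescaled_bound_35.
Qed.
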